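(* For $1\le j,k\le N$, $m,n\in\mathbb Z\setminus\{0\}$ and each choice of signs, the bosons $\mathcal E^{\pm j}_m$ satisfy \begin{align*} [\mathcal E^{\pm j}_m,\mathcal E^{\pm j}_n]&=\delta_{m+n,0}\,\frac{[cm]_q[\eta m]_q[2(\eta+1)m]_q}{m(q-q^{-1})^2[m]_q^3[2\eta m]_q[(\eta+1)m]_q}\,\frac{1-p^m}{1-p^{*m}}\,q^{-cm},\\ [\mathcal E^{\pm j}_m,\mathcal E^{\mp j}_n]&=\mp\delta_{m+n,0}\,\frac{q^{\pm jm}[cm]_q[\eta m]_q}{m[m]_q^3(q-q^{-1})^2[2\eta m]_q}\,\frac{1-p^m}{1-p^{*m}}\,q^{-cm}\left(q^{\pm(\eta+j)m}[m]_q\pm q^{\mp(j-1)m}[\eta m]_+\right),\\ [\mathcal E^{\pm j}_m,\mathcal E^{\pm k}_n]&=\mp\,\mathrm{sgn}(k-j)\,\delta_{m+n,0}\,q^{\mp(\mathrm{sgn}(k-j)\eta+k-j)m}\,\frac{[cm]_q[\eta m]_q}{m(q-q^{-1})[m]_q^2[2\eta m]_q}\,\frac{1-p^m}{1-p^{*m}}\,q^{-cm}\quad(j\neq k),\\ [\mathcal E^{\pm j}_m,\mathcal E^{\mp k}_n]&=\mp\,\delta_{m+n,0}\,q^{\pm(\eta+j+k)m}\,\frac{[cm]_q[\eta m]_q}{m(q-q^{-1})[m]_q^2[2\eta m]_q}\,\frac{1-p^m}{1-p^{*m}}\,q^{-cm}\quad(j\neq k), \end{align*} where $\mathrm{sgn}(l-j)=+$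 if $l>j$ and $-$ if $l<j$.
   Context: Fix an integer $N\ge 2$, complex numbers $q,p$ with $0<|q|<1$, $|p|<1$, and a central element $c$. Put $p^*=pq^{-2c}$, $[n]_q=\frac{q^n-q^{-n}}{q-q^{-1}}$, $[n]_+=\frac{q^n+q^{-n}}{q-q^{-1}}$ (also for non-integer $n$). Let $(b_{ij})_{i,j=1}^N$ be the symmetrized Cartan matrix of type $B_N$: $b_{ii}=2$ for $1\le i\le N-1$, $b_{NN}=1$, $b_{i,i+1}=b_{i+1,i}=-1$ for $1\le i\le N-1$, all other entries $0$. The elliptic bosons $\alpha_{j,m}$ ($1\le j\le N$, $m\in\mathbb Z\setminus\{0\}$) satisfy $[\alpha_{i,m},\alpha_{j,n}]=\delta_{m+n,0}\frac{[b_{ij}m]_q[cm]_q}{m}\frac{1-p^m}{1-p^{*m}}q^{-cm}$. Set $\eta=-(2N-1)/2$, $C_m=\frac{[\eta m]_q}{[m]_q^2[2\eta m]_q}$, and for $1\le j\le N$, $m\ne0$, $$\mathcal E^{\pm j}_m=q^{\pm jm}C_m\Big(q^{\pm\eta m}\sum_{k=1}^{j-1}[km]_q\alpha_{k,m}\pm\sum_{k=j}^{N}[(\eta+k)m]_+\alpha_{k,m}\Big).$$ *)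

From HB Require Import structures.
From mathcomp Require Import all_boot all_order all_algebra.
Set Implicit Arguments. Unset Strict Implicit. Unset Printing Implicit Defensive.
Import Order.TTheory GRing.Theory Num.Theory.
Local Open Scope ring_scope.

(* Conventions.
   - The base field is an arbitrary numClosedFieldType C (e.g. the complex numbers).
   - s is a fixed square root of q (s ^+ 2 = q), so that half-integral powers of q
     are integral powers of s:  q^(h/2) := s ^ h  (h : int).
   - Qc stands for q^c (the value of q raised to the central element c); all
     quantities depend on c only through q^(c m) = Qc ^ m.
   - Bosons are indexed by k : nat with 1 <= k <= N and m : int, m <> 0, and live
     in an algebra A over C; scalars act through  x%:A. *)

Definition comm (A : nzRingType) (x y : A) : A := x * y - y * x.

(* [x]_q written through X = q^x :  (X - X^-1)/(q - q^-1). *)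
Definition qbr (C : fieldType) (q X : C) : C := (X - X^-1) / (q - q^-1).
(* [x]_+ written through X = q^x :  (X + X^-1)/(q - q^-1). *)
Definition qbrp (C : fieldType) (q X : C) : C := (X + X^-1) / (q - q^-1).

(* [h/2]_q and [h/2]_+ for h : int, in terms of s with s^2 = q. *)
Definition qh (C : fieldType) (s : C) (h : int) : C := qbr (s ^+ 2) (s ^ h).
Definition qhp (C : fieldType) (s : C) (h : int) : C := qbrp (s ^+ 2) (s ^ h).

(* 2*eta = -(2N-1) *)
Definition eta2 (N : nat) : int := - (2 * N%:Z - 1).

(* Symmetrized Cartan matrix of type B_N (indices 1..N). *)
Definition bB (N i j : nat) : int :=
  if i == j then (if i == N then 1 else 2)
  else if (i.+1 == j) || (j.+1 == i) then -1 else 0.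

Definition sgnb (b : bool) : int := if b then 1 else -1.

(* The common elliptic factor  [cm]_q / m * (1-p^m)/(1-p*^m) * q^(-cm),
   with p* = p q^(-2c). *)
Definition ellF (C : fieldType) (q p Qc : C) (m : int) : C :=
  qbr q (Qc ^ m) / m%:~R * ((1 - p ^ m) / (1 - (p * Qc ^ (-2)) ^ m)) * Qc ^ (- m).

(* C_m = [eta m]_q / ([m]_q^2 [2 eta m]_q) *)
Definition Cm (C : fieldType) (N : nat) (s : C) (m : int) : C :=
  qh s (eta2 N * m) / (qh s (2 * m) ^+ 2 * qh s (2 * eta2 N * m)).

(* E^{eps j}_m, eps = sgnb b:
   q^{eps j m} C_m ( q^{eps eta m} sum_{k=1}^{j-1} [k m]_q alpha_{k,m}
                     + eps sum_{k=j}^{N} [(eta+k) m]_+ alpha_{k,m} ) *)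
Definition Ebos (C : fieldType) (A : algType C) (N : nat) (s : C)
    (alpha : nat -> int -> A) (b : bool) (j : nat) (m : int) : A :=
  (s ^ (2 * sgnb b * j%:Z * m) * Cm N s m) *:
    ((s ^ (sgnb b * eta2 N * m)) *: (\sum_(1 <= k < j) qh s (2 * k%:Z * m) *: alpha k m)
     + (sgnb b)%:~R *: (\sum_(j <= k < N.+1) qhp s ((eta2 N + 2 * k%:Z) * m) *: alpha k m)).

(* Write E^{±j}_m = sum_k c_k alpha_{k,m}.  By bilinearity, the commutator of E^{±j}_m
   with E^{±'j'}_{-m} is the elliptic factor times sum_{k,l} c_k [b_kl m]_q c'_l: the
   q-Cartan matrix of B_N applied to the coefficient sequence c' and paired with c.
   The sequence c' is glued at j' from two solutions of the recurrence
   [2m]_q x_l = [m]_q (x_{l-1} + x_{l+1}), namely [lm]_q below j' and [(eta+l)m]_+ from j'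
   on; since eta + N = 1/2 the upper branch is symmetric about N - 1/2, which is the
   boundary condition of the short root.  Hence the Cartan matrix kills c' except on the
   rows j'-1 and j', where it returns the jumps of c' at the gluing point, and these are
   evaluated by [a+b]_+ - q^a [b]_q = q^(-b) [a]_+. *)

From HB Require Import structures.
From mathcomp Require Import all_boot all_order all_algebra.
From mathcomp Require Import ring zify.
Import Order.TTheory GRing.Theory Num.Theory.
Set Implicit Arguments. Unset Strict Implicit. Unset Printing Implicit Defensive.
Local Open Scope ring_scope.

Lemma comm_sum_scale (C : fieldType) (A : algType C) (I J : eqType)
    (r1 : seq I) (r2 : seq J) (a : I -> C) (b : J -> C) (X : I -> A) (Y : J -> A)
    (c : I -> J -> C) :
  (forall i j, i \in r1 -> j \in r2 -> comm (X i) (Y j) = (c i j)%:A) ->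
  comm (\sum_(i <- r1) a i *: X i) (\sum_(j <- r2) b j *: Y j) =
  (\sum_(i <- r1) \sum_(j <- r2) a i * b j * c i j)%:A.
Proof.
move=> XY; rewrite /comm mulr_suml mulr_sumr -sumrB scaler_suml.
apply: eq_big_seq => i ri; rewrite mulr_sumr mulr_suml -sumrB scaler_suml.
apply: eq_big_seq => j rj; rewrite -scalerAl -scalerAr -scalerAl -scalerAr.
by rewrite !scalerA (mulrC (b j)) -scalerBr -/(comm _ _) XY // scalerA.
Qed.

Lemma sgnbN b : sgnb (~~ b) = - sgnb b.
Proof. by case: b. Qed.

Lemma qbr1 (C : fieldType) (q : C) : qbr q 1 = 0.
Proof. by rewrite /qbr invr1 subrr mul0r. Qed.

Lemma qbrV (C : fieldType) (q X : C) : qbr q X^-1 = - qbr q X.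
Proof. by rewrite /qbr invrK -mulNr opprB. Qed.

Section QNumbers.
Variables (C : fieldType) (s : C).
Hypotheses (s0 : s != 0) (s4 : s ^+ 4 != 1).

(* The form in which [field] asks for [s ^+ 4 != 1]. *)
Let s4_field : (s * s) ^+ 2 - 1 != 0.
Proof. by rewrite subr_eq0 -expr2 -exprM. Qed.

Lemma qhN h : qh s (- h) = - qh s h.
Proof. by rewrite /qh -invr_expz qbrV. Qed.

Lemma qhpN h : qhp s (- h) = qhp s h.
Proof. by rewrite /qhp /qbrp -invr_expz invrK addrC. Qed.

Lemma qh0 : qh s 0 = 0.
Proof. by rewrite /qh expr0z qbr1. Qed.

Lemma qh_double h : qh s (2 * h) = (s ^+ 2 - (s ^+ 2)^-1) * qh s h * qhp s h.
Proof.
rewrite /qh /qhp /qbr /qbrp mulr_natl mulr2n expfzDr //.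
by field; rewrite s0 s4_field !expfz_neq0.
Qed.

Lemma qh_rec a b : qh s (2 * b) * qh s a = qh s b * (qh s (a + b) + qh s (a - b)).
Proof.
rewrite /qh /qbr mulr_natl mulr2n !expfzDr // -?invr_expz.
by field; rewrite s0 s4_field !expfz_neq0.
Qed.

Lemma qhp_rec a b : qh s (2 * b) * qhp s a = qh s b * (qhp s (a + b) + qhp s (a - b)).
Proof.
rewrite /qh /qhp /qbr /qbrp mulr_natl mulr2n !expfzDr // -?invr_expz.
by field; rewrite s0 s4_field !expfz_neq0.
Qed.

Lemma qhp_glue b x y :
  (sgnb b)%:~R * qhp s (x + y) - s ^ (sgnb b * x) * qh s y =
  (sgnb b)%:~R * s ^ (- (sgnb b * y)) * qhp s x.
Proof.
rewrite /qh /qhp /qbr /qbrp.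
by case: b => /=; rewrite ?mul1r ?mulN1r ?opprK !expfzDr // -?invr_expz;
  field; rewrite s0 s4_field !expfz_neq0.
Qed.

Lemma qh_shift c a d :
  qh s a * s ^ (- (sgnb c * d)) - qh s (a - d) = s ^ (- (sgnb c * a)) * qh s d.
Proof.
rewrite /qh /qbr.
by case: c => /=; rewrite ?mul1r ?mulN1r ?opprK !expfzDr // -?invr_expz;
  field; rewrite s0 s4_field !expfz_neq0.
Qed.

Lemma qhp_shift c a d :
  qhp s a * s ^ (- (sgnb c * d)) - qhp s (a - d) =
  - (sgnb c)%:~R * s ^ (- (sgnb c * a)) * qh s d.
Proof.
rewrite /qh /qhp /qbr /qbrp.
by case: c => /=; rewrite ?mul1r ?mulN1r ?opprK !expfzDr // -?invr_expz;
  field; rewrite s0 s4_field !expfz_neq0.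
Qed.

End QNumbers.

Ltac decide_bools := repeat match goal with
  | |- context [if ?c then _ else _] =>
      first [ rewrite (_ : c = true); last by lia | rewrite (_ : c = false); last by lia ]
  | |- context [nat_of_bool ?c] =>
      first [ rewrite (_ : c = true); last by lia | rewrite (_ : c = false); last by lia ]
  end.

(* The row [k] of the q-Cartan matrix ([[b_kl m]_q]) of type [B_N] applied to [g],
   with [x1 = [m]_q] and [x2 = [2m]_q]; row [N] is that of the short root. *)
Definition cartanB (C : nzRingType) (N : nat) (x1 x2 : C) (g : nat -> C) (k : nat) : C :=
  if k == N then x1 * (g k - g k.-1) else x2 * g k - x1 * (g k.-1 + g k.+1).

Lemma sum_nat_dirac (C : nzSemiRingType) (a b i : nat) (x : C) :
  \sum_(a <= l < b) (l == i)%:R * x = (a <= i < b)%:R * x.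
Proof.
rewrite (eq_bigr (fun l => if l == i then x else 0)) => [|l _]; last first.
  by case: eqP; rewrite ?mul1r ?mul0r.
by rewrite -big_mkcond big_nat1_eq; case: ifP; rewrite ?mul1r ?mul0r.
Qed.

Section CartanGlue.
Variables (C : comNzRingType) (N j : nat) (x1 x2 : C) (lo up : nat -> C).
Hypotheses (j_in : (1 <= j <= N)%N)
  (lo_rec : forall k, (0 < k)%N -> x2 * lo k = x1 * (lo k.-1 + lo k.+1))
  (up_rec : forall k, (0 < k)%N -> x2 * up k = x1 * (up k.-1 + up k.+1))
  (up_N : up N = up N.-1).

Let g k := if (k < j)%N then lo k else up k.

Lemma cartanB_glue k : (1 <= k <= N)%N ->
  cartanB N x1 x2 g k =
  (k == j.-1)%:R * (x1 * (lo j - up j)) + (k == j)%:R * (x1 * (up j.-1 - lo j.-1)).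
Proof.
move=> k_in; rewrite /cartanB /g.
case: (ltngtP k j) => [kj|jk|->].
- have [->|kj1] := eqVneq k j.-1.
    have jE : (j.-1).+1 = j by rewrite prednK //; lia.
    rewrite jE; decide_bools; rewrite /= lo_rec; last by lia.
    by rewrite jE mul1r mul0r addr0; ring.
  decide_bools; rewrite /= lo_rec; last by lia.
  by rewrite !mul0r addr0 subrr.
- have [->|kN] := eqVneq k N.
    by decide_bools; rewrite /= up_N subrr mulr0 !mul0r addr0.
  by decide_bools; rewrite /= up_rec ?subrr ?mul0r ?addr0 //; lia.
- have [jN|jN] := eqVneq j N.
    by rewrite jN; decide_bools; rewrite /= up_N mul0r add0r mul1r.
  decide_bools; rewrite /= mul0r add0r mul1r up_rec; [ring | lia].
Qed.

Lemma sum_cartanB_glue (a : nat -> C) : a 0%N = 0 ->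
  \sum_(1 <= k < N.+1) a k * cartanB N x1 x2 g k =
  x1 * (a j.-1 * (lo j - up j) + a j * (up j.-1 - lo j.-1)).
Proof.
move=> a0; rewrite (eq_big_nat _ _ (F2 := fun k =>
    (k == j.-1)%:R * (a j.-1 * (x1 * (lo j - up j)))
  + (k == j)%:R * (a j * (x1 * (up j.-1 - lo j.-1))))); last first.
  move=> k k_in; rewrite cartanB_glue; last by lia.
  by case: eqP => [->|_]; case: eqP => [->|_]; rewrite ?mul0r ?mul1r; ring.
rewrite big_split /= !sum_nat_dirac; decide_bools.
case: (posnP j.-1) => [->|_]; rewrite ?a0; decide_bools; rewrite /=; ring.
Qed.

End CartanGlue.

Lemma sum_qbr_bB (C : fieldType) N (q : C) (m : int) (g : nat -> C) k :
  g 0%N = 0 -> (1 <= k <= N)%N ->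
  \sum_(1 <= l < N.+1) qbr q (q ^ (bB N k l * m)) * g l =
  cartanB N (qbr q (q ^ m)) (qbr q (q ^ (2 * m))) g k.
Proof.
move=> g0 k_in; set x1 := qbr q (q ^ m).
set d := qbr q (q ^ ((if k == N then 1 else 2) * m)).
have entry l : (1 <= l < N.+1)%N -> qbr q (q ^ (bB N k l * m)) * g l =
    (l == k)%:R * (d * g k) - (l == k.-1)%:R * (x1 * g k.-1)
    - (l == k.+1)%:R * (x1 * g k.+1).
  move=> /andP[l0 _]; rewrite /bB.
  have off : qbr q (q ^ (0 * m)) = 0 by rewrite mul0r expr0z qbr1.
  have adj : qbr q (q ^ (-1 * m)) = - x1 by rewrite mulN1r -invr_expz qbrV.
  case: (ltngtP l k) => [lk|kl|->].
  - have [->|lk1] := eqVneq l k.-1; decide_bools; rewrite /= ?adj ?off; ring.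
  - have [->|kl1] := eqVneq l k.+1; decide_bools; rewrite /= ?adj ?off; ring.
  - by decide_bools; rewrite /= mul1r !mul0r !subr0.
rewrite (eq_big_nat _ _ entry) !sumrB !sum_nat_dirac /cartanB /d.
have g_pred : (1 <= k.-1 < N.+1)%:R * (x1 * g k.-1) = x1 * g k.-1.
  by case: (posnP k.-1) => [->|k1]; rewrite ?g0 ?mulr0; decide_bools; rewrite /= ?mul1r.
rewrite g_pred; have [->|kN] := eqVneq k N; decide_bools; rewrite /= ?mul1r -/x1; ring.
Qed.

Lemma expfz_merge (C : fieldType) (x : C) (a b c : int) :
  x != 0 -> a + b = c -> x ^ a * x ^ b = x ^ c.
Proof. by move=> x0 <-; rewrite expfzDr. Qed.

Section Coefficients.
Variables (C : fieldType) (N : nat) (s : C).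

Definition Epref b (j : nat) (m : int) : C := s ^ (2 * sgnb b * j%:Z * m) * Cm N s m.
Definition Elo b j m (k : int) : C :=
  Epref b j m * (s ^ (sgnb b * eta2 N * m) * qh s (2 * k * m)).
Definition Eup b j m (k : int) : C :=
  Epref b j m * ((sgnb b)%:~R * qhp s ((eta2 N + 2 * k) * m)).
Definition Ecoef b j m (k : nat) : C :=
  if (k < j)%N then Elo b j m k else Eup b j m k.

Lemma Ebos_expand (A : algType C) (alpha : nat -> int -> A) b j m :
  (1 <= j <= N.+1)%N ->
  Ebos N s alpha b j m = \sum_(1 <= k < N.+1) Ecoef b j m k *: alpha k m.
Proof.
case/andP=> j1 jN; rewrite /Ebos [RHS](@big_cat_nat _ _ _ j) // scalerDr !scaler_sumr.
congr (_ + _); apply: eq_big_nat => k /andP[k1 k2]; rewrite /Ecoef !scalerA.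
  by rewrite k2 /Elo /Epref !mulrA.
by rewrite ltnNge k1 /Eup /Epref !mulrA.
Qed.

Lemma Elo0 b j m : Elo b j m 0 = 0.
Proof. by rewrite /Elo mulr0 mul0r qh0 !mulr0. Qed.

Lemma Cm_opp m : Cm N s (- m) = Cm N s m.
Proof. by rewrite /Cm !mulrN !qhN sqrrN mulrN invrN mulrNN. Qed.

Hypotheses (s0 : s != 0) (s4 : s ^+ 4 != 1).

Lemma Elo_rec b j m k :
  qh s (2 * (2 * m)) * Elo b j m k = qh s (2 * m) * (Elo b j m (k - 1) + Elo b j m (k + 1)).
Proof.
have km : 2 * (k - 1) * m = 2 * k * m - 2 * m by ring.
have kp : 2 * (k + 1) * m = 2 * k * m + 2 * m by ring.
rewrite /Elo km kp [RHS](_ : _ = Epref b j m * s ^ (sgnb b * eta2 N * m) *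
  (qh s (2 * m) * (qh s (2 * k * m + 2 * m) + qh s (2 * k * m - 2 * m)))); last by ring.
by rewrite -qh_rec //; ring.
Qed.

Lemma Eup_rec b j m k :
  qh s (2 * (2 * m)) * Eup b j m k = qh s (2 * m) * (Eup b j m (k - 1) + Eup b j m (k + 1)).
Proof.
have km : (eta2 N + 2 * (k - 1)) * m = (eta2 N + 2 * k) * m - 2 * m by ring.
have kp : (eta2 N + 2 * (k + 1)) * m = (eta2 N + 2 * k) * m + 2 * m by ring.
rewrite /Eup km kp [RHS](_ : _ = Epref b j m * (sgnb b)%:~R * (qh s (2 * m) *
  (qhp s ((eta2 N + 2 * k) * m + 2 * m) + qhp s ((eta2 N + 2 * k) * m - 2 * m)))); last by ring.
by rewrite -qhp_rec //; ring.
Qed.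

Lemma Eup_N b j m : Eup b j m N = Eup b j m (N%:Z - 1).
Proof.
rewrite /Eup; have -> : (eta2 N + 2 * (N%:Z - 1)) * m = - ((eta2 N + 2 * N%:Z) * m).
  by rewrite /eta2; ring.
by rewrite qhpN.
Qed.

Lemma Eup_sub_Elo b j m k :
  Eup b j m k - Elo b j m k =
  (sgnb b)%:~R * s ^ (2 * sgnb b * (j%:Z - k) * m) * Cm N s m * qhp s (eta2 N * m).
Proof.
rewrite /Eup /Elo /Epref -mulrBr [(eta2 N + _) * m]mulrDl -[sgnb b * _ * m]mulrA qhp_glue //.
have pw : s ^ (2 * sgnb b * j%:Z * m) * s ^ (- (sgnb b * (2 * k * m))) =
    s ^ (2 * sgnb b * (j%:Z - k) * m) by apply: expfz_merge => //; ring.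
by rewrite -pw; ring.
Qed.

Lemma Elo_step b c j m k :
  Elo b j m k * s ^ (- (sgnb c * (2 * m))) - Elo b j m (k - 1) =
  Cm N s m * qh s (2 * m) *
  s ^ ((2 * sgnb b * j%:Z + sgnb b * eta2 N - 2 * sgnb c * k) * m).
Proof.
have km : 2 * (k - 1) * m = 2 * k * m - 2 * m by ring.
rewrite /Elo /Epref km [LHS](_ : _ = s ^ (2 * sgnb b * j%:Z * m) * Cm N s m *
  s ^ (sgnb b * eta2 N * m) *
  (qh s (2 * k * m) * s ^ (- (sgnb c * (2 * m))) - qh s (2 * k * m - 2 * m))); last by ring.
have pw : s ^ (2 * sgnb b * j%:Z * m) * s ^ (sgnb b * eta2 N * m) *
    s ^ (- (sgnb c * (2 * k * m))) =
    s ^ ((2 * sgnb b * j%:Z + sgnb b * eta2 N - 2 * sgnb c * k) * m).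
  by rewrite -!expfzDr //; congr (_ ^ _); ring.
by rewrite qh_shift // -pw; ring.
Qed.

Lemma Eup_step b c j m k :
  Eup b j m k * s ^ (- (sgnb c * (2 * m))) - Eup b j m (k - 1) =
  - (sgnb b * sgnb c)%:~R * Cm N s m * qh s (2 * m) *
  s ^ ((2 * sgnb b * j%:Z - sgnb c * (eta2 N + 2 * k)) * m).
Proof.
have km : (eta2 N + 2 * (k - 1)) * m = (eta2 N + 2 * k) * m - 2 * m by ring.
rewrite /Eup /Epref km [LHS](_ : _ = s ^ (2 * sgnb b * j%:Z * m) * Cm N s m * (sgnb b)%:~R *
  (qhp s ((eta2 N + 2 * k) * m) * s ^ (- (sgnb c * (2 * m)))
   - qhp s ((eta2 N + 2 * k) * m - 2 * m))); last by ring.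
have pw : s ^ (2 * sgnb b * j%:Z * m) * s ^ (- (sgnb c * ((eta2 N + 2 * k) * m))) =
    s ^ ((2 * sgnb b * j%:Z - sgnb c * (eta2 N + 2 * k)) * m).
  by apply: expfz_merge => //; ring.
by rewrite qhp_shift // -pw intrM; ring.
Qed.

Lemma Ecoef_step_eq b c j m : (0 < j)%N ->
  Ecoef b j m j * s ^ (- (sgnb c * (2 * m))) - Ecoef b j m j.-1 =
  Cm N s m * ((sgnb b)%:~R * s ^ (- (sgnb c * (2 * m))) * qhp s (eta2 N * m)
    + qh s (2 * m) * s ^ ((2 * sgnb b * j%:Z + sgnb b * eta2 N - 2 * sgnb c * j%:Z) * m)).
Proof.
move=> j0; rewrite /Ecoef; decide_bools; rewrite predn_int //.
set S := s ^ _; rewrite (_ : Eup b j m j * S - Elo b j m (j%:Z - 1) =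
  (Eup b j m j - Elo b j m j) * S + (Elo b j m j * S - Elo b j m (j%:Z - 1))); last by ring.
by rewrite Eup_sub_Elo // Elo_step // subrr mulr0 mul0r expr0z; ring.
Qed.

Lemma Ecoef_step_lt b c j m k : (0 < k < j)%N ->
  Ecoef b j m k * s ^ (- (sgnb c * (2 * m))) - Ecoef b j m k.-1 =
  Cm N s m * qh s (2 * m) *
  s ^ ((2 * sgnb b * j%:Z + sgnb b * eta2 N - 2 * sgnb c * k%:Z) * m).
Proof.
by move=> k_in; rewrite /Ecoef; decide_bools; rewrite predn_int ?Elo_step //; lia.
Qed.

Lemma Ecoef_step_gt b c j m k : (j < k)%N ->
  Ecoef b j m k * s ^ (- (sgnb c * (2 * m))) - Ecoef b j m k.-1 =
  Cm N s m * qh s (2 * m) *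
  (- (sgnb b * sgnb c)%:~R * s ^ ((2 * sgnb b * j%:Z - sgnb c * (eta2 N + 2 * k%:Z)) * m)).
Proof.
move=> jk; rewrite /Ecoef; decide_bools; rewrite predn_int ?Eup_step //; [ring | lia].
Qed.

End Coefficients.

Lemma qbr_sqr (C : fieldType) (s : C) (h : int) : qbr (s ^+ 2) ((s ^+ 2) ^ h) = qh s (2 * h).
Proof. by rewrite /qh exprnP exprz_exp. Qed.

Lemma comm_Ebos_opp (C : fieldType) (A : algType C) N (s : C) (alpha : nat -> int -> A)
    (W : C) b b' j j' m :
  s != 0 -> s ^+ 4 != 1 -> (1 <= j <= N)%N -> (1 <= j' <= N)%N ->
  (forall i l, (1 <= i <= N)%N -> (1 <= l <= N)%N ->
     comm (alpha i m) (alpha l (- m)) = (qbr (s ^+ 2) ((s ^+ 2) ^ (bB N i l * m)) * W)%:A) ->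
  comm (Ebos N s alpha b j m) (Ebos N s alpha b' j' (- m)) =
  ((sgnb b')%:~R * qh s (2 * m) * Cm N s m * qhp s (eta2 N * m) *
   (Ecoef N s b j m j' * s ^ (- (sgnb b' * (2 * m))) - Ecoef N s b j m j'.-1) * W)%:A.
Proof.
move=> s0 s4 j_in j'_in alphaE.
rewrite !Ebos_expand; [|lia|lia].
rewrite (@comm_sum_scale _ _ _ _ _ _ _ _ _ _ (fun i l => qbr (s ^+ 2) ((s ^+ 2) ^ (bB N i l * m)) * W));
  last by move=> i l; rewrite !mem_index_iota => ? ?; apply: alphaE; lia.
congr (_%:A).
set a := Ecoef N s b j m; set g := Ecoef N s b' j' (- m).
have g0 : g 0%N = 0 by rewrite /g /Ecoef (_ : (0 < j')%N) ?Elo0 //; lia.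
rewrite (eq_big_nat _ _ (F2 := fun i =>
    W * (a i * cartanB N (qh s (2 * m)) (qh s (2 * (2 * m))) g i))); last first.
  move=> i i_in; have i_in' : (1 <= i <= N)%N by lia.
  rewrite -!qbr_sqr -sum_qbr_bB //.
  by rewrite !mulr_sumr; apply: eq_bigr => l _; ring.
have harmonic (f : int -> C) k :
    (forall k, qh s (2 * (2 * - m)) * f k = qh s (2 * - m) * (f (k - 1) + f (k + 1))) ->
    (0 < k)%N -> qh s (2 * (2 * m)) * f k = qh s (2 * m) * (f k.-1 + f k.+1).
  move=> rec k0; rewrite predn_int // -[k.+1]addn1 PoszD.
  by move: (rec k); rewrite !mulrN !qhN !mulNr => /oppr_inj.
rewrite -mulr_sumr /g /Ecoef (sum_cartanB_glue (lo := fun k : nat => Elo N s b' j' (- m) k)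
  (up := fun k : nat => Eup N s b' j' (- m) k)) //; first last.
- by rewrite /a /Ecoef (_ : (0 < j)%N) ?Elo0 //; lia.
- by rewrite predn_int ?Eup_N //; lia.
- move=> k; apply: harmonic => {}k; exact: Eup_rec.
- move=> k; apply: harmonic => {}k; exact: Elo_rec.
have jump_j : Elo N s b' j' (- m) j' - Eup N s b' j' (- m) j' =
    - ((sgnb b')%:~R * Cm N s m * qhp s (eta2 N * m)).
  by rewrite -opprB (Eup_sub_Elo N s0 s4) subrr mulr0 mul0r expr0z mulr1 Cm_opp mulrN qhpN.
have jump_j1 : Eup N s b' j' (- m) j'.-1 - Elo N s b' j' (- m) j'.-1 =
    (sgnb b')%:~R * s ^ (- (sgnb b' * (2 * m))) * Cm N s m * qhp s (eta2 N * m).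
  rewrite (Eup_sub_Elo N s0 s4) predn_int; last by lia.
  have -> : 2 * sgnb b' * (j'%:Z - (j'%:Z - 1)) * - m = - (sgnb b' * (2 * m)) by ring.
  by rewrite Cm_opp mulrN qhpN.
by rewrite jump_j jump_j1; ring.
Qed.

Lemma comm_Ebos_eq0 (C : fieldType) (A : algType C) N (s : C) (alpha : nat -> int -> A)
    b b' j j' m n :
  (1 <= j <= N)%N -> (1 <= j' <= N)%N ->
  (forall i l, (1 <= i <= N)%N -> (1 <= l <= N)%N -> comm (alpha i m) (alpha l n) = 0) ->
  comm (Ebos N s alpha b j m) (Ebos N s alpha b' j' n) = 0.
Proof.
move=> j_in j'_in alpha0; rewrite !Ebos_expand; [|lia|lia].
rewrite (@comm_sum_scale _ _ _ _ _ _ _ _ _ _ (fun _ _ => 0)); last first.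
  by move=> i l; rewrite !mem_index_iota scale0r => ? ?; apply: alpha0; lia.
by rewrite big1 ?scale0r // => i _; rewrite big1 // => l _; rewrite mulr0.
Qed.

Lemma subr_inv_neq0 (C : fieldType) (x : C) : x != 0 -> x ^+ 2 != 1 -> x - x^-1 != 0.
Proof.
move=> x0; apply: contra; rewrite subr_eq0 => /eqP xE.
by rewrite expr2 {2}xE mulfV.
Qed.

Section SmallModulus.
Variables (C : numFieldType) (s : C).
Hypotheses (s0 : s != 0) (s_lt1 : `|s| < 1).

Lemma expz_neq1 h : h != 0 -> s ^ h != 1.
Proof.
have pos n : (0 < n)%N -> s ^+ n != 1.
  move=> n0; apply/eqP => /(congr1 Num.norm); rewrite normrX normr1 => e.
  by move: (exprn_ilt1 n (normr_ge0 s) s_lt1); rewrite e ltxx -lt0n n0.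
case: h => n h0; first by apply: pos; rewrite lt0n.
by rewrite NegzE -invr_expz invr_eq1 pos.
Qed.

Lemma exp4_neq1 : s ^+ 4 != 1.
Proof. exact: (@expz_neq1 4%:Z). Qed.

Lemma qh_neq0 h : h != 0 -> qh s h != 0.
Proof.
move=> h0; rewrite /qh /qbr mulf_neq0 ?invr_neq0 ?subr_inv_neq0 ?expf_neq0 ?expfz_neq0 //.
  by rewrite exprnP exprz_exp expz_neq1 // mulf_neq0.
by rewrite -exprM exp4_neq1.
Qed.

End SmallModulus.

Section ClosedForms.
Variables (C : fieldType) (N : nat) (s : C) (m : int).
Hypotheses (s0 : s != 0) (s4 : s ^+ 4 != 1) (x1_0 : qh s (2 * m) != 0)
  (h2e_0 : qh s (2 * eta2 N * m) != 0) (he2_0 : qh s ((eta2 N + 2) * m) != 0).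

Let Q0 : s ^+ 2 - (s ^+ 2)^-1 != 0.
Proof. by rewrite subr_inv_neq0 ?expf_neq0 // -exprM. Qed.

Let he_qp_0 : (qh s (eta2 N * m) != 0) && (qhp s (eta2 N * m) != 0).
Proof. by move: h2e_0; rewrite -mulrA qh_double // !mulf_eq0 !negb_or => /andP[/andP[_ ->] ->]. Qed.

Lemma comm_coef_diag b j : (0 < j)%N ->
  (sgnb b)%:~R * qh s (2 * m) * Cm N s m * qhp s (eta2 N * m) *
  (Ecoef N s b j m j * s ^ (- (sgnb b * (2 * m))) - Ecoef N s b j m j.-1) =
  qh s (eta2 N * m) * qh s (2 * (eta2 N + 2) * m)
  / ((s ^+ 2 - (s ^+ 2)^-1) ^+ 2 * qh s (2 * m) ^+ 3 * qh s (2 * eta2 N * m)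
     * qh s ((eta2 N + 2) * m)).
Proof.
move=> j0; rewrite Ecoef_step_eq // -qhp_glue //.
rewrite (_ : (2 * sgnb b * j%:Z + sgnb b * eta2 N - 2 * sgnb b * j%:Z) * m =
  sgnb b * (eta2 N * m)); last by ring.
rewrite -mulrDl /Cm -[2 * eta2 N * m]mulrA -[2 * (eta2 N + 2) * m]mulrA.
rewrite [qh s (2 * (eta2 N * m))]qh_double // [qh s (2 * ((eta2 N + 2) * m))]qh_double //.
case/andP: he_qp_0 => he0 qp0; move: (s ^+ 2 - (s ^+ 2)^-1) Q0 => Q Q_0.
by case: b; rewrite /= ?mulr1z ?mulrN1z; field; rewrite Q_0 x1_0 he0 qp0 he2_0.
Qed.

Lemma comm_coef_diag_opp b j : (0 < j)%N ->
  (sgnb (~~ b))%:~R * qh s (2 * m) * Cm N s m * qhp s (eta2 N * m) *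
  (Ecoef N s b j m j * s ^ (- (sgnb (~~ b) * (2 * m))) - Ecoef N s b j m j.-1) =
  - (sgnb b)%:~R * (s ^ (2 * sgnb b * j%:Z * m) * qh s (eta2 N * m)
      / (qh s (2 * m) ^+ 3 * (s ^+ 2 - (s ^+ 2)^-1) * qh s (2 * eta2 N * m)))
  * (s ^ (sgnb b * (eta2 N + 2 * j%:Z) * m) * qh s (2 * m)
     + (sgnb b)%:~R * s ^ (- (sgnb b * 2 * (j%:Z - 1) * m)) * qhp s (eta2 N * m)).
Proof.
move=> j0; rewrite Ecoef_step_eq //.
have e1 : s ^ (2 * sgnb b * j%:Z * m) * s ^ (sgnb b * (eta2 N + 2 * j%:Z) * m) =
    s ^ ((2 * sgnb b * j%:Z + sgnb b * eta2 N - 2 * sgnb (~~ b) * j%:Z) * m).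
  by apply: expfz_merge => //; rewrite sgnbN; ring.
have e2 : s ^ (2 * sgnb b * j%:Z * m) * s ^ (- (sgnb b * 2 * (j%:Z - 1) * m)) = s ^ (- (sgnb (~~ b) * (2 * m))).
  by apply: expfz_merge => //; rewrite sgnbN; ring.
rewrite [RHS](_ : _ = - (sgnb b)%:~R * qh s (eta2 N * m)
    / (qh s (2 * m) ^+ 3 * (s ^+ 2 - (s ^+ 2)^-1) * qh s (2 * eta2 N * m))
  * (s ^ (2 * sgnb b * j%:Z * m) * s ^ (sgnb b * (eta2 N + 2 * j%:Z) * m) * qh s (2 * m)
     + (sgnb b)%:~R * (s ^ (2 * sgnb b * j%:Z * m) * s ^ (- (sgnb b * 2 * (j%:Z - 1) * m))) * qhp s (eta2 N * m)));
  last by ring.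
rewrite {}e1 {}e2 /Cm -[2 * eta2 N * m]mulrA [qh s (2 * (eta2 N * m))]qh_double //.
case/andP: he_qp_0 => he0 qp0; move: (s ^+ 2 - (s ^+ 2)^-1) Q0 => Q Q_0.
by case: b; rewrite /= ?mulr1z ?mulrN1z; field; rewrite Q_0 x1_0 he0 qp0.
Qed.

Lemma coef_offdiag_factor c u :
  (sgnb c)%:~R * qh s (2 * m) * Cm N s m * qhp s (eta2 N * m) * (Cm N s m * qh s (2 * m) * u) =
  (sgnb c)%:~R * u
  * (qh s (eta2 N * m) / ((s ^+ 2 - (s ^+ 2)^-1) * qh s (2 * m) ^+ 2 * qh s (2 * eta2 N * m))).
Proof.
rewrite /Cm -[2 * eta2 N * m]mulrA [qh s (2 * (eta2 N * m))]qh_double //.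
case/andP: he_qp_0 => he0 qp0; move: (s ^+ 2 - (s ^+ 2)^-1) Q0 => Q Q_0.
by field; rewrite Q_0 x1_0 he0 qp0.
Qed.

Lemma comm_coef_offdiag b j k : (0 < j)%N -> (0 < k)%N -> j != k ->
  (sgnb b)%:~R * qh s (2 * m) * Cm N s m * qhp s (eta2 N * m) *
  (Ecoef N s b j m k * s ^ (- (sgnb b * (2 * m))) - Ecoef N s b j m k.-1) =
  - (sgnb b)%:~R * (sgnb (j < k)%N)%:~R
  * s ^ (- (sgnb b * (sgnb (j < k)%N * eta2 N + 2 * (k%:Z - j%:Z)) * m))
  * (qh s (eta2 N * m)
     / ((s ^+ 2 - (s ^+ 2)^-1) * qh s (2 * m) ^+ 2 * qh s (2 * eta2 N * m))).
Proof.
move=> j0 k0; case: (ltngtP j k) => // [jk|kj] _.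
- rewrite Ecoef_step_gt // coef_offdiag_factor /=.
  rewrite (_ : (2 * sgnb b * j%:Z - sgnb b * (eta2 N + 2 * k%:Z)) * m =
    - (sgnb b * (1 * eta2 N + 2 * (k%:Z - j%:Z)) * m)); last by ring.
  by case: b; rewrite /= ?mulr1z ?mulrN1z; ring.
- rewrite Ecoef_step_lt ?k0 // coef_offdiag_factor /=.
  rewrite (_ : (2 * sgnb b * j%:Z + sgnb b * eta2 N - 2 * sgnb b * k%:Z) * m =
    - (sgnb b * (-1 * eta2 N + 2 * (k%:Z - j%:Z)) * m)); last by ring.
  by case: b; rewrite /= ?mulr1z ?mulrN1z; ring.
Qed.

Lemma comm_coef_offdiag_opp b j k : (0 < j)%N -> (0 < k)%N -> j != k ->
  (sgnb (~~ b))%:~R * qh s (2 * m) * Cm N s m * qhp s (eta2 N * m) *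
  (Ecoef N s b j m k * s ^ (- (sgnb (~~ b) * (2 * m))) - Ecoef N s b j m k.-1) =
  - (sgnb b)%:~R * s ^ (sgnb b * (eta2 N + 2 * (j%:Z + k%:Z)) * m)
  * (qh s (eta2 N * m)
     / ((s ^+ 2 - (s ^+ 2)^-1) * qh s (2 * m) ^+ 2 * qh s (2 * eta2 N * m))).
Proof.
move=> j0 k0; case: (ltngtP j k) => // [jk|kj] _.
- rewrite Ecoef_step_gt // coef_offdiag_factor sgnbN.
  rewrite (_ : (2 * sgnb b * j%:Z - - sgnb b * (eta2 N + 2 * k%:Z)) * m =
    sgnb b * (eta2 N + 2 * (j%:Z + k%:Z)) * m); last by ring.
  by case: b; rewrite /= ?mulr1z ?mulrN1z; ring.
- rewrite Ecoef_step_lt ?k0 // coef_offdiag_factor sgnbN.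
  rewrite (_ : (2 * sgnb b * j%:Z + sgnb b * eta2 N - 2 * - sgnb b * k%:Z) * m =
    sgnb b * (eta2 N + 2 * (j%:Z + k%:Z)) * m); last by ring.
  by case: b; rewrite /= ?mulr1z ?mulrN1z; ring.
Qed.

End ClosedForms.

Theorem proposition2p2
  (C : numClosedFieldType) (A : algType C) (N : nat) (hN : (2 <= N)%N)
  (q s p Qc : C) (hq0 : 0 < `|q|) (hq1 : `|q| < 1) (hp : `|p| < 1)
  (hs : s ^+ 2 = q) (hQc : Qc != 0)
  (alpha : nat -> int -> A)
  (halpha : forall (i j : nat) (m n : int),
      (1 <= i <= N)%N -> (1 <= j <= N)%N -> m != 0 -> n != 0 ->
      comm (alpha i m) (alpha j n) =
        (if m + n == 0 then qbr q (q ^ (bB N i j * m)) * ellF q p Qc m else 0)%:A) :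
  forall (b : bool) (j k : nat) (m n : int),
    (1 <= j <= N)%N -> (1 <= k <= N)%N -> m != 0 -> n != 0 ->
    let eps : C := (sgnb b)%:~R in
    let et := eta2 N in
    let d : C := if m + n == 0 then 1 else 0 in
    let E := Ebos N s alpha in
    (* [E^{±j}_m, E^{±j}_n] *)
    [/\ comm (E b j m) (E b j n) =
          (d * (qbr q (Qc ^ m) * qh s (et * m) * qh s (2 * (et + 2) * m)
                / (m%:~R * (q - q^-1) ^+ 2 * qh s (2 * m) ^+ 3 * qh s (2 * et * m)
                   * qh s ((et + 2) * m)))
            * ((1 - p ^ m) / (1 - (p * Qc ^ (-2)) ^ m)) * Qc ^ (- m))%:A,
        (* [E^{±j}_m, E^{∓j}_n] *)
        comm (E b j m) (E (~~ b) j n) =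
          (- eps * d * (s ^ (2 * sgnb b * j%:Z * m) * qbr q (Qc ^ m) * qh s (et * m)
                / (m%:~R * qh s (2 * m) ^+ 3 * (q - q^-1) * qh s (2 * et * m)))
            * ((1 - p ^ m) / (1 - (p * Qc ^ (-2)) ^ m)) * Qc ^ (- m)
            * (s ^ (sgnb b * (et + 2 * j%:Z) * m) * qh s (2 * m)
               + eps * s ^ (- (sgnb b * 2 * (j%:Z - 1) * m)) * qhp s (et * m)))%:A,
        (* [E^{±j}_m, E^{±k}_n], j <> k *)
        j != k ->
        comm (E b j m) (E b k n) =
          (- eps * (sgnb (j < k)%N)%:~R * d
            * s ^ (- (sgnb b * (sgnb (j < k)%N * et + 2 * (k%:Z - j%:Z)) * m))
            * (qbr q (Qc ^ m) * qh s (et * m)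
                / (m%:~R * (q - q^-1) * qh s (2 * m) ^+ 2 * qh s (2 * et * m)))
            * ((1 - p ^ m) / (1 - (p * Qc ^ (-2)) ^ m)) * Qc ^ (- m))%:A
      & (* [E^{±j}_m, E^{∓k}_n], j <> k *)
        j != k ->
        comm (E b j m) (E (~~ b) k n) =
          (- eps * d * s ^ (sgnb b * (et + 2 * (j%:Z + k%:Z)) * m)
            * (qbr q (Qc ^ m) * qh s (et * m)
                / (m%:~R * (q - q^-1) * qh s (2 * m) ^+ 2 * qh s (2 * et * m)))
            * ((1 - p ^ m) / (1 - (p * Qc ^ (-2)) ^ m)) * Qc ^ (- m))%:A].
Proof.
move=> b j k m n j_in k_in m0 n0 eps et d E; rewrite {}/eps {}/et {}/d {}/E; subst q.
have s0 : s != 0 by apply: contraTneq hq0 => ->; rewrite expr0n normr0 ltxx.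
have s1 : `|s| < 1 by rewrite -(@expr_lt1 _ 2) // -normrX.
have s4 := exp4_neq1 s1.
have [mn|mn] := eqVneq (m + n) 0; last first.
  have alpha0 i l : (1 <= i <= N)%N -> (1 <= l <= N)%N -> comm (alpha i m) (alpha l n) = 0.
    by move=> i_in l_in; rewrite halpha // (negbTE mn) scale0r.
  by split=> *; rewrite comm_Ebos_eq0 // !(mul0r, mulr0) scale0r.
have -> : n = - m by apply/eqP; rewrite -subr_eq0 opprK addrC mn.
have alphaE i l : (1 <= i <= N)%N -> (1 <= l <= N)%N -> comm (alpha i m) (alpha l (- m)) =
    (qbr (s ^+ 2) ((s ^+ 2) ^ (bB N i l * m)) * ellF (s ^+ 2) p Qc m)%:A.
  by move=> i_in l_in; rewrite halpha ?oppr_eq0 // subrr eqxx.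
have x1_0 : qh s (2 * m) != 0 by rewrite qh_neq0 // mulf_neq0.
have h2e_0 : qh s (2 * eta2 N * m) != 0 by rewrite qh_neq0 // !mulf_neq0 // /eta2; lia.
have he2_0 : qh s ((eta2 N + 2) * m) != 0 by rewrite qh_neq0 // mulf_neq0 // /eta2; lia.
split=> [||jk|jk]; rewrite (comm_Ebos_opp (W := ellF (s ^+ 2) p Qc m)) //; congr (_%:A).
- by rewrite comm_coef_diag //; [rewrite /ellF !invfM; ring | lia].
- by rewrite comm_coef_diag_opp //; [rewrite /ellF !invfM; ring | lia].
- by rewrite comm_coef_offdiag //; [rewrite /ellF !invfM; ring | lia | lia].
- by rewrite comm_coef_offdiag_opp //; [rewrite /ellF !invfM; ring | lia | lia].
Qed.
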